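(* Let $G$ be an oriented graph on $[n]$ with $|\mathcal{P}(G)|\ge 1$, and suppose the poset $P=([n],\le_G)$ has dimension $2$. Then \[\max_{\sigma,\rho\in\mathcal{P}(G)} d_K(\sigma,\rho)=|I(P)|.\]
   Context: Write a permutation $\sigma\in S_n$ as $\sigma=\sigma_1\cdots\sigma_n$. A permutation $\sigma$ satisfies an oriented graph $G=([n],E)$ if $\sigma_u>\sigma_v$ for every oriented edge $u\to v\in E$; $\mathcal{P}(G)$ is the set of permutations satisfying $G$. Write $u\rightsquigarrow v$ if there is an oriented path from $u$ to $v$ in $G$. The poset $P=([n],\le_G)$ is defined by $a\le_G b$ iff $a\rightsquigarrow b$ or $a=b$. The dimension of a poset is the smallest number of total orders on its ground set whose intersection is the poset's order. $I(P)=\{(i,j): i<j,\ i\not\rightsquigarrow j,\ j\not\rightsquigarrow i\}$ is the set of incomparable pairs. For $\sigma,\rho\in S_n$, a pair $i<j$ is discordant if $(\sigma_i-\sigma_j)(\rho_i-\rho_j)<0$; $d_K(\sigma,\rho)$ (Kendall-Tau metric) is the number of discordant pairs. *)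

From mathcomp Require Import all_boot all_order all_algebra all_fingroup.
Set Implicit Arguments. Unset Strict Implicit. Unset Printing Implicit Defensive.
Import GRing.Theory Num.Theory.

Definition oriented_graph (n : nat) (E : rel 'I_n) : Prop :=
  (forall u, ~~ E u u) /\ (forall u v, E u v -> ~~ E v u).

Definition satisfies (n : nat) (E : rel 'I_n) (s : {perm 'I_n}) : bool :=
  [forall u, forall v, E u v ==> (s v < s u)%N].

Definition leG (n : nat) (E : rel 'I_n) : rel 'I_n := connect E.

Definition reach (n : nat) (E : rel 'I_n) (u v : 'I_n) : bool :=
  [exists w, E u w && connect E w v].

Definition total_order (n : nat) (L : rel 'I_n) : Prop :=
  reflexive L /\ antisymmetric L /\ transitive L /\ total L.

Definition realizer (n : nat) (R : rel 'I_n) (k : nat) : Prop :=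
  exists L : 'I_k -> rel 'I_n,
    (forall i, total_order (L i)) /\
    (forall a b, R a b = [forall i, L i a b]).

Definition poset_dim (n : nat) (R : rel 'I_n) (d : nat) : Prop :=
  realizer R d /\ (forall k, (k < d)%N -> ~ realizer R k).

Definition incomparable_pairs (n : nat) (E : rel 'I_n) : {set 'I_n * 'I_n} :=
  [set p : 'I_n * 'I_n | [&& (p.1 < p.2)%N, ~~ reach E p.1 p.2 & ~~ reach E p.2 p.1]].

Definition discordant (n : nat) (s r : {perm 'I_n}) (i j : 'I_n) : bool :=
  (((s i)%:Z - (s j)%:Z) * ((r i)%:Z - (r j)%:Z) < 0)%R.

Definition dK (n : nat) (s r : {perm 'I_n}) : nat :=
  #|[set p : 'I_n * 'I_n | (p.1 < p.2)%N && discordant s r p.1 p.2]|.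

From mathcomp Require Import all_boot all_order all_algebra all_fingroup.
Import GRing.Theory Num.Theory.
Set Implicit Arguments. Unset Strict Implicit. Unset Printing Implicit Defensive.

(* Two linear extensions of G order every comparable pair the same way, so only
   the incomparable pairs can be discordant.  Conversely, if the total orders
   L0, L1 realize <=_G, they order every incomparable pair oppositely (else the
   pair would be comparable in L0 /\ L1); the rank permutations of L0 and L1 are
   then linear extensions that are discordant on all of I(P). *)

Section Rank.
Variables (n : nat) (L : rel 'I_n).
Hypothesis TL : total_order L.

Lemma total_orderN u v : u != v -> L u v = ~~ L v u.
Proof.
have [_ [antiL [_ totL]]] := TL; move=> neq_uv.
case Luv: (L u v); last by case/orP: (totL u v) => [|->]; rewrite ?Luv.
by apply/esym/negP => Lvu; move/negP: neq_uv; apply; rewrite (antiL u v) ?Luv.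
Qed.

(* [rank u] counts the elements strictly above [u], so it reverses [L], as the
   convention sigma_u > sigma_v for edges u -> v requires. *)
Definition rank (u : 'I_n) : nat := #|[pred w | L u w & w != u]|.

Lemma rank_lt u : (rank u < n)%N.
Proof.
rewrite -[n in (_ < n)%N]card_ord; apply: proper_card; apply/properP.
by split; [apply/subsetP | exists u; rewrite // inE eqxx andbF].
Qed.

Lemma rank_ltn u v : L u v -> u != v -> (rank v < rank u)%N.
Proof.
have [_ [antiL [transL _]]] := TL; move=> Luv neq_uv.
apply: proper_card; apply/properP; split.
  apply/subsetP => w; rewrite !inE => /andP[Lvw neq_wv].
  rewrite (transL _ _ _ Luv Lvw); apply: contra_neq neq_uv => eq_wu.
  by apply: antiL; rewrite Luv -eq_wu.
by exists v; rewrite !inE ?eqxx ?andbF // Luv eq_sym.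
Qed.

Lemma rank_inj : injective (fun u => Ordinal (rank_lt u)).
Proof.
move=> u v /(congr1 val) /= eq_rank; apply/eqP/negPn/negP => neq_uv.
have neq_vu : v != u by rewrite eq_sym.
case: (boolP (L u v)) => [Luv | NLuv].
  by have := rank_ltn Luv neq_uv; rewrite eq_rank ltnn.
have Lvu : L v u by rewrite (total_orderN neq_vu).
by have := rank_ltn Lvu neq_vu; rewrite eq_rank ltnn.
Qed.

Definition rank_perm : {perm 'I_n} := perm rank_inj.

Lemma rank_permE u : rank_perm u = rank u :> nat.
Proof. by rewrite permE. Qed.

Lemma ltn_rank_perm u v : u != v -> (rank_perm u < rank_perm v)%N = L v u.
Proof.
move=> neq_uv; rewrite !rank_permE.
case Lvu: (L v u); first by apply: rank_ltn; rewrite // eq_sym.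
apply/negbTE; rewrite -leqNgt ltnW // rank_ltn //.
by rewrite total_orderN // Lvu.
Qed.

End Rank.

Section LinearExtensions.
Variables (n : nat) (E : rel 'I_n).

Lemma satisfiesP (s : {perm 'I_n}) :
  reflect (forall u v, E u v -> (s v < s u)%N) (satisfies E s).
Proof.
apply: (iffP forallP) => [sat_s u v | sat_s u].
  by move/forallP: (sat_s u) => /(_ v) /implyP.
by apply/forallP => v; apply/implyP/sat_s.
Qed.

Lemma satisfies_connect s u v : satisfies E s -> connect E u v -> (s v <= s u)%N.
Proof.
move=> /satisfiesP sat_s /connectP [p + ->] {v}.
elim: p u => [|w p IHp] u //= /andP[Euw path_p].
exact: leq_trans (IHp _ path_p) (ltnW (sat_s _ _ Euw)).
Qed.

Lemma satisfies_reach s u v : satisfies E s -> reach E u v -> (s v < s u)%N.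
Proof.
move=> sat_s /existsP [w /andP [Euw conn_wv]].
by apply: leq_ltn_trans (satisfies_connect sat_s conn_wv) _; apply/satisfiesP: Euw.
Qed.

Lemma connect_reach u v : connect E u v -> u != v -> reach E u v.
Proof.
move=> /connectP [[|w p] /= + ->]; first by rewrite eqxx.
by case/andP=> Euw path_p _; apply/existsP; exists w; rewrite Euw; apply/connectP; exists p.
Qed.

Lemma satisfies_rank_perm L (TL : total_order L) :
  (forall u, ~~ E u u) -> subrel E L -> satisfies E (rank_perm TL).
Proof.
move=> irrE EL; apply/satisfiesP => u v Euv; rewrite !rank_permE.
apply: (rank_ltn TL (EL _ _ Euv)).
by apply: contraTneq Euv => <-; apply: irrE.
Qed.

End LinearExtensions.

Definition discordant_pairs n (s r : {perm 'I_n}) : {set 'I_n * 'I_n} :=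
  [set p : 'I_n * 'I_n | (p.1 < p.2)%N && discordant s r p.1 p.2].

Lemma discordantE n (s r : {perm 'I_n}) i j : i != j ->
  discordant s r i j = (s i < s j)%N (+) (r i < r j)%N.
Proof.
move=> neq_ij.
rewrite /discordant mulr_lt0 !subr_lt0 !subr_eq0 !ltz_nat !eqz_nat.
by rewrite !(inj_eq val_inj) !(inj_eq perm_inj) neq_ij.
Qed.

Lemma discordant_pairs_incomparable n (E : rel 'I_n) s r :
  satisfies E s -> satisfies E r ->
  discordant_pairs s r \subset incomparable_pairs E.
Proof.
move=> sat_s sat_r; apply/subsetP => -[i j]; rewrite !inE /= => /andP[lt_ij].
have neq_ij : i != j by rewrite neq_ltn lt_ij.
rewrite lt_ij discordantE //=; apply: contraTT; rewrite negb_and !negbK.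
case/orP=> /[dup] /(satisfies_reach sat_s) lt_s /(satisfies_reach sat_r) lt_r.
  by rewrite ltnNge (ltnW lt_s) ltnNge (ltnW lt_r).
by rewrite lt_s lt_r.
Qed.

Lemma incomparable_pairs_discordant n (E : rel 'I_n) L0 L1
    (TL0 : total_order L0) (TL1 : total_order L1) :
  (forall u v, leG E u v = L0 u v && L1 u v) ->
  incomparable_pairs E \subset discordant_pairs (rank_perm TL0) (rank_perm TL1).
Proof.
move=> leGE; apply/subsetP => -[i j]; rewrite !inE /= => /and3P[lt_ij Nreach_ij Nreach_ji].
have neq_ij : i != j by rewrite neq_ltn lt_ij.
have neq_ji : j != i by rewrite eq_sym.
have reach_both u v : u != v -> L0 u v -> L1 u v -> reach E u v.
  move=> neq_uv L0uv L1uv; apply: connect_reach neq_uv.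
  by rewrite -/(leG E u v) leGE L0uv L1uv.
rewrite lt_ij discordantE // !ltn_rank_perm //=.
case L0ji: (L0 j i); case L1ji: (L1 j i) => //=.
  by rewrite reach_both in Nreach_ji.
rewrite reach_both // in Nreach_ij.
  by rewrite (total_orderN TL0) // L0ji.
by rewrite (total_orderN TL1) // L1ji.
Qed.

Lemma realizer2P n (R : rel 'I_n) : realizer R 2 ->
  exists L0 L1, [/\ total_order L0, total_order L1 &
                    forall u v, R u v = L0 u v && L1 u v].
Proof.
case=> L [TL RL]; exists (L ord0), (L ord_max); split=> // u v; rewrite RL.
apply/forallP/andP => [LR | [L0uv L1uv] [[|[|k]] lt_k2] //].
  by split; apply: LR.
by rewrite (_ : Ordinal _ = ord0) //; apply: val_inj.
by rewrite (_ : Ordinal _ = ord_max) //; apply: val_inj.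
Qed.

Theorem mainTheorem8 (n : nat) (E : rel 'I_n) :
  oriented_graph E ->
  (0 < #|[set s : {perm 'I_n} | satisfies E s]|)%N ->
  poset_dim (leG E) 2 ->
  \max_(p : {perm 'I_n} * {perm 'I_n} | satisfies E p.1 && satisfies E p.2)
      dK p.1 p.2
  = #|incomparable_pairs E|.
Proof.
move=> [irrE _] _ [/realizer2P [L0 [L1 [TL0 TL1 leGE]]] _].
have [EL0 EL1] : subrel E L0 /\ subrel E L1.
  by split=> u v /connect1; rewrite -/(leG E u v) leGE => /andP[].
apply/eqP; rewrite eqn_leq; apply/andP; split.
  apply/bigmax_leqP => -[s r] /andP[sat_s sat_r].
  exact/subset_leq_card/discordant_pairs_incomparable.
apply: leq_trans (leq_bigmax_cond (rank_perm TL0, rank_perm TL1) _).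
  exact/subset_leq_card/incomparable_pairs_discordant.
by rewrite /= !satisfies_rank_perm.
Qed.
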